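(* Let $R$ be a commutative ring, $n$ a positive integer, and $x_1,\dots,x_{n+1}\in J(R)$. Then the ideal $x_1\cdots x_{n+1}R$ is a weakly $n$-absorbing ideal of $R$ if and only if $x_1\cdots x_{n+1}=0$.
   Context: All rings are commutative with $1\neq0$. $J(R)$ denotes the intersection of all maximal ideals of $R$. A proper ideal $I$ of $R$ is weakly $n$-absorbing if whenever $0\neq a_1\cdots a_{n+1}\in I$ with $a_1,\dots,a_{n+1}\in R$, there are $n$ of the $a_i$'s whose product is in $I$. *)

From mathcomp Require Import all_boot all_order all_algebra.
Set Implicit Arguments. Unset Strict Implicit. Unset Printing Implicit Defensive.
Import GRing.Theory.
Local Open Scope ring_scope.

Definition is_ideal (R : comNzRingType) (I : R -> Prop) : Prop :=
  [/\ I 0,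
      (forall x y, I x -> I y -> I (x + y)),
      (forall x, I x -> I (- x)) &
      (forall r x, I x -> I (r * x))].

Definition proper_ideal (R : comNzRingType) (I : R -> Prop) : Prop :=
  is_ideal I /\ ~ I 1.

Definition maximal_ideal (R : comNzRingType) (M : R -> Prop) : Prop :=
  proper_ideal M /\
  forall N : R -> Prop, is_ideal N -> (forall x, M x -> N x) ->
    (forall x, N x <-> M x) \/ N 1.

Definition jacobson (R : comNzRingType) (x : R) : Prop :=
  forall M : R -> Prop, maximal_ideal M -> M x.

Definition principal_ideal (R : comNzRingType) (a : R) : R -> Prop :=
  fun y => exists r : R, y = a * r.

Definition weakly_n_absorbing (R : comNzRingType) (n : nat) (I : R -> Prop) : Prop :=
  proper_ideal I /\
  forall a : 'I_n.+1 -> R,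
    \prod_(i < n.+1) a i != 0 -> I (\prod_(i < n.+1) a i) ->
    exists j : 'I_n.+1, I (\prod_(i < n.+1 | i != j) a i).

(* If [x_1 ... x_(n+1) R] were weakly n-absorbing with nonzero generator
   [P = x_j y], applying the definition to the factors [x_i] themselves gives
   some [j] with [y = P r = x_j r y].  As [x_j] lies in the Jacobson radical,
   [1 - x_j r] is a unit, so [y = 0] and hence [P = 0].  The unit claim is the
   usual one: a non-unit lies in a maximal ideal (Krull, via Zorn's lemma). *)

From Pilot Require Import Defs.
From mathcomp Require Import all_boot all_order all_algebra.
From mathcomp Require Import boolp classical_sets.
Import GRing.Theory.
Local Open Scope ring_scope.
Local Open Scope classical_set_scope.

Section Ideals.
Context {R : comNzRingType}.

Lemma principal_ideal_is_ideal (a : R) : is_ideal (principal_ideal a).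
Proof.
split.
- by exists 0; rewrite mulr0.
- by move=> _ _ [r ->] [s ->]; exists (r + s); rewrite mulrDr.
- by move=> _ [r ->]; exists (- r); rewrite mulrN.
- by move=> t _ [r ->]; exists (t * r); rewrite mulrCA.
Qed.

Lemma principal_ideal_self (a : R) : principal_ideal a a.
Proof. by exists 1; rewrite mulr1. Qed.

Lemma proper_principal_ideal0 : Defs.proper_ideal (principal_ideal (0 : R)).
Proof.
split; first exact: principal_ideal_is_ideal.
by case=> r /eqP; rewrite mul0r oner_eq0.
Qed.

Lemma bigcup_ideal_chain (F : set (set R)) (X0 : set R) :
  F X0 -> (forall X, F X -> is_ideal X) -> total_on F subset ->
  is_ideal (\bigcup_(X in F) X).
Proof.
move=> FX0 Fideal Ftot; split.
- by exists X0 => //; case: (Fideal X0 FX0).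
- move=> a b [X FX Xa] [Y FY Yb].
  have [XY|YX] := Ftot X Y FX FY.
  + by exists Y => //; case: (Fideal Y FY) => _ addY _ _; apply: addY; first exact: XY.
  + by exists X => //; case: (Fideal X FX) => _ addX _ _; apply: addX; last exact: YX.
- by move=> a [X FX Xa]; exists X => //; case: (Fideal X FX) => _ _ oppX _; exact: oppX.
- by move=> r a [X FX Xa]; exists X => //; case: (Fideal X FX) => _ _ _ mulX; exact: mulX.
Qed.

Lemma maximal_ideal_exists (u : R) :
  ~ principal_ideal u 1 -> exists M, maximal_ideal M /\ M u.
Proof.
move=> u_nonunit.
(* [set0] is admitted so that the empty chain has an upper bound. *)
pose P (X : set R) := [/\ is_ideal X, ~ X 1 & X u] \/ X = set0.
have [|M [PM Mmax]] := @Zorn_bigcup R P.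
  move=> F FP Ftot.
  have [[X0 FX0 X0u]|noFu] := pselect (exists2 X, F X & X u); last first.
    right; apply/seteqP; split=> // z [X FX Xz].
    have [[_ _ Xu]|Xempty] := FP X FX; last by rewrite Xempty in Xz.
    by exfalso; apply: noFu; exists X.
  pose Fu := [set X | F X /\ X u].
  have FuP X : Fu X -> [/\ is_ideal X, ~ X 1 & X u].
    by case=> /FP [//|-> []].
  have -> : \bigcup_(X in F) X = \bigcup_(X in Fu) X.
    apply/seteqP; split=> z [X FX Xz]; exists X => //; last by case: FX.
    by split=> //; have [[]//|Xempty] := FP X FX; rewrite Xempty in Xz.
  left; split.
  - by apply: (@bigcup_ideal_chain _ X0) => [|X /FuP[]|X Y [FX _] [FY _]]; last exact: Ftot.
  - by case=> X /FuP[].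
  - by exists X0.
have {PM}[[MI M1 Mu]|M0] := PM; last first.
  exfalso; apply: (Mmax (principal_ideal u)); last first.
    by left; split; [exact: principal_ideal_is_ideal | | exact: principal_ideal_self].
  by rewrite M0; split=> // /(_ u (principal_ideal_self u)).
exists M; split=> //; split=> // N NI MN.
have [N1|N1] := pselect (N 1); [by right | left].
have [NM|NM] := pselect (N `<=` M); first by split; [apply: NM | apply: MN].
by exfalso; apply: (Mmax N); [split | left; split=> //; apply: MN].
Qed.

Lemma jacobson_subr_unit (x r : R) : jacobson x -> principal_ideal (1 - x * r) 1.
Proof.
move=> Jx; apply: contrapT => /maximal_ideal_exists [M [maxM Mu]].
have Mx := Jx M maxM.
case: maxM => [[[_ addM _ mulM] M1] _]; apply: M1.
by have := addM _ _ Mu (mulM r _ Mx); rewrite [r * _]mulrC subrK.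
Qed.

Lemma jacobson_absorb_eq0 (x r y : R) : jacobson x -> y = x * r * y -> y = 0.
Proof.
move=> Jx yE; have [v unit_v] := jacobson_subr_unit x r Jx.
have y_annihilates : y * (1 - x * r) = 0.
  by rewrite mulrBr mulr1 mulrC -yE subrr.
by rewrite -[y]mulr1 unit_v mulrA y_annihilates mul0r.
Qed.

End Ideals.

Theorem mainTheorem18 (R : comNzRingType) (n : nat) (hn : (0 < n)%N)
  (x : 'I_n.+1 -> R) (hx : forall i, jacobson (x i)) :
  weakly_n_absorbing n (principal_ideal (\prod_(i < n.+1) x i))
  <-> \prod_(i < n.+1) x i = 0.
Proof.
set P := \prod_(i < n.+1) x i.
split=> [[_ absorbing]|P0].
  apply/eqP/negPn/negP => P_neq0.
  have [j [r yE]] := absorbing x P_neq0 (principal_ideal_self P).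
  set y := \prod_(i < n.+1 | i != j) x i in yE.
  have PE : P = x j * y by rewrite /P (bigD1 j).
  have y0 : y = 0.
    by apply: (jacobson_absorb_eq0 _ r _ (hx j)); rewrite {1}yE PE mulrAC.
  by move: P_neq0; rewrite PE y0 mulr0 eqxx.
rewrite P0; split; first exact: proper_principal_ideal0.
by move=> a prod_neq0 [r prodE]; rewrite prodE mul0r eqxx in prod_neq0.
Qed.
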